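(* Let $\lambda$ be a Young diagram with $\ell$ corners (removable boxes) $c_1,\dots,c_\ell$ and with addable boxes $s_0,s_1,\dots,s_\ell$. Set $X_i = x\,t\,\mathrm{wt}(c_i)$ for $1\le i\le \ell$ and $U_k=\mathrm{wt}(s_k)$ for $0\le k\le\ell$. Then \[ \sum_{k=0}^{\ell} \frac{1}{U_k^{\,j}}\, \frac{1}{\displaystyle \prod_{\substack{i=0\\ i\neq k}}^{\ell} \Bigl(1 - \frac{U_i}{U_k}\Bigr)} = \begin{cases} 1,&j=0,\\ 0,&1\leq j\leq \ell,\\ \dfrac{(-1)^\ell}{X_1\cdots X_{\ell}}, &j=\ell+1. \end{cases} \]
   Context: Here $x$ and $t$ are two variables (indeterminates). For a box $b$ of (or addable to) a Young diagram, its weight is $\mathrm{wt}(b)=x^{l'(b)}t^{a'(b)}$, where $l'(b)$ is the coleg and $a'(b)$ the coarm of $b$; i.e., for a box in row $r$ and column $c$ (rows and columns numbered from $1$, English convention with the first row on top), $l'(b)=r-1$ and $a'(b)=c-1$. A Young diagram with $\ell$ corners has exactly $\ell+1$ addable boxes. *)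

From mathcomp Require Import all_boot all_order all_algebra.
From mathcomp Require Import fraction.
Set Implicit Arguments. Unset Strict Implicit. Unset Printing Implicit Defensive.
Import GRing.Theory.
Local Open Scope ring_scope.

(* The field Q(x,t) of rational functions in two indeterminates x and t,
   realized as the fraction field of Q[x][t] = {poly {poly rat}}. *)
Local Notation tofrac := (@FracField.tofrac _).
Definition QXT := {fraction {poly {poly rat}}}.
Definition xvar : QXT := tofrac (('X : {poly rat})%:P).
Definition tvar : QXT := tofrac ('X : {poly {poly rat}}).

Definition is_partition (la : seq nat) : bool :=
  sorted geq la && all (fun p => 0 < p)%N la.

(* Boxes are pairs (row, column), numbered from 1, English convention. *)
Definition corners (la : seq nat) : seq (nat * nat) :=
  [seq (i.+1, nth 0%N la i) | i <- iota 0 (size la) & (nth 0%N la i.+1 < nth 0%N la i)%N].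

Definition addable (la : seq nat) : seq (nat * nat) :=
  [seq (i.+1, (nth 0%N la i).+1) | i <- iota 0 (size la).+1
     & (i == 0%N) || (nth 0%N la i < nth 0%N la i.-1)%N].

Definition wt (b : nat * nat) : QXT := xvar ^+ (b.1 - 1) * tvar ^+ (b.2 - 1).

(* Since [1 - U_i / U_k = (U_k - U_i) / U_k], the k-th summand is
   [U_k ^ (l - j) / prod_(i != k) (U_k - U_i)].  Lagrange interpolation of ['X^m] at the
   l+1 distinct points [U_k] shows that [sum_k U_k ^ m / prod_(i != k) (U_k - U_i)] is the
   coefficient of ['X^l] in ['X^m] for [m <= l]; interpolating [1] and evaluating at 0
   handles [j = l+1].  The product of the [U_k] is that of the [X_i] because each
   addable box but the first lies one row below a corner, and the column exponents
   telescope along the weakly decreasing rows. *)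

From mathcomp Require Import all_boot all_order all_algebra.
From mathcomp Require Import fraction ring.
Import GRing.Theory.
Local Open Scope ring_scope.

Section LagrangeSums.
Set Implicit Arguments. Unset Strict Implicit.
Variables (K : fieldType) (n : nat) (u : 'I_n -> K).
Hypothesis u_inj : injective u.

Definition lagrange_numer (k : 'I_n) : {poly K} :=
  \prod_(i < n | i != k) ('X - (u i)%:P).
Definition lagrange_denom (k : 'I_n) : K := \prod_(i < n | i != k) (u k - u i).

Lemma lagrange_denom_neq0 k : lagrange_denom k != 0.
Proof.
by apply/prodf_neq0 => i ik; rewrite subr_eq0 (inj_eq u_inj) eq_sym.
Qed.

Lemma horner_lagrange_numer k m :
  (lagrange_numer k).[u m] = if m == k then lagrange_denom k else 0.
Proof.
rewrite horner_prod; have [->|mk] := eqVneq m k.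
  by apply: eq_bigr => i _; rewrite hornerXsubC.
by rewrite (bigD1 m) //= hornerXsubC subrr mul0r.
Qed.

Lemma size_lagrange_numer k : size (lagrange_numer k) = n.
Proof.
rewrite /lagrange_numer -big_filter size_prod_XsubC.
have [_ _ _ [_ ->]] := big_enumP.
by rewrite cardC1 card_ord prednK // (leq_ltn_trans _ (ltn_ord k)).
Qed.

Lemma lagrange_interpolation (p : {poly K}) : (size p <= n)%N ->
  p = \sum_(k < n) (p.[u k] / lagrange_denom k) *: lagrange_numer k.
Proof.
move=> size_p; apply/eqP; rewrite -subr_eq0; apply/eqP.
apply: (@roots_geq_poly_eq0 _ _ [seq u k | k <- enum 'I_n]).
- apply/allP => _ /mapP [m _ ->].
  rewrite /root hornerD hornerN horner_sum (bigD1 m) //= big1 => [|k km].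
    rewrite hornerZ horner_lagrange_numer eqxx divfK ?lagrange_denom_neq0 //.
    by rewrite addr0 subrr.
  by rewrite hornerZ horner_lagrange_numer eq_sym (negPf km) mulr0.
- by rewrite map_inj_uniq ?enum_uniq.
rewrite size_map size_enum_ord; apply: leq_trans (size_polyD _ _) _.
rewrite geq_max size_p size_polyN; apply: leq_trans (size_sum _ _ _) _.
apply/bigmax_leqP => k _; apply: leq_trans (size_scale_leq _ _) _.
by rewrite size_lagrange_numer.
Qed.

Lemma sum_exp_div_lagrange_denom m : (m < n)%N ->
  \sum_(k < n) u k ^+ m / lagrange_denom k = (m == n.-1)%:R.
Proof.
move=> lt_mn; have size_Xm : (size ('X^m : {poly K}) <= n)%N by rewrite size_polyXn.
have := congr1 (fun p : {poly K} => p`_n.-1) (lagrange_interpolation size_Xm).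
rewrite coefXn eq_sym coef_sum => ->.
apply: eq_bigr => k _; rewrite coefZ hornerXn.
have lead_numer := lead_coef_prod_XsubC (index_enum 'I_n) (fun i => i != k) u.
by rewrite lead_coefE size_lagrange_numer in lead_numer; rewrite lead_numer mulr1.
Qed.

Lemma sum_inv_div_lagrange_denom : (0 < n)%N -> (forall k, u k != 0) ->
  \sum_(k < n) (u k)^-1 / lagrange_denom k = (-1) ^+ n.-1 / \prod_(k < n) u k.
Proof.
move=> n_gt0 u_neq0.
have size_1 : (size (1%R : {poly K}) <= n)%N by rewrite size_poly1.
have := congr1 (horner^~ 0) (lagrange_interpolation size_1).
rewrite hornerC horner_sum => one_eq.
have scaled_sum_eq1 :
    (-1) ^+ n.-1 * \prod_(k < n) u k * \sum_(k < n) (u k)^-1 / lagrange_denom k = 1.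
  rewrite [RHS]one_eq mulr_sumr; apply: eq_bigr => k _.
  rewrite hornerZ hornerC mul1r horner_prod.
  rewrite [in RHS](eq_bigr (fun i => - u i)) => [|i _]; last by rewrite hornerXsubC sub0r.
  rewrite prodrN cardC1 card_ord (bigD1 k) //=.
  by field; rewrite u_neq0 lagrange_denom_neq0.
rewrite (canRL (mulKf _) scaled_sum_eq1) ?mulr1 ?invfM ?invr_sign //.
by rewrite mulf_neq0 ?signr_eq0 //; apply/prodf_neq0.
Qed.

End LagrangeSums.

Lemma prod_one_sub_div (K : fieldType) (n : nat) (u : 'I_n.+1 -> K) (k : 'I_n.+1) :
  u k != 0 ->
  \prod_(i < n.+1 | i != k) (1 - u i / u k) = lagrange_denom u k / u k ^+ n.
Proof.
move=> uk_neq0; rewrite -exprVn /lagrange_denom.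
rewrite (eq_bigr (fun i => (u k - u i) * (u k)^-1)) => [|i _]; last first.
  by rewrite mulrBl divff.
by rewrite big_split /= prodr_const cardC1 card_ord.
Qed.

Lemma sum_inv_exp_div_prod_one_sub {K : fieldType} {n j : nat} (u : 'I_n.+1 -> K) :
  injective u -> (forall k, u k != 0) -> (j <= n.+1)%N ->
  \sum_(k < n.+1) (u k ^+ j)^-1 / \prod_(i < n.+1 | i != k) (1 - u i / u k)
  = if j == 0%N then 1
    else if (j <= n)%N then 0
    else (-1) ^+ n / \prod_(k < n.+1) u k.
Proof.
move=> u_inj u_neq0 le_j_Sn.
under eq_bigr => k _ do
  rewrite prod_one_sub_div // invf_div mulrA [_^-1 * _]mulrC.
have [-> | j_gt0] := posnP j.
  under eq_bigr => k _ do rewrite expr0 divr1.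
  by rewrite sum_exp_div_lagrange_denom // eqxx.
have [le_jn | lt_nj] := leqP j n.
  under eq_bigr => k _ do rewrite -exprB ?unitfE //.
  rewrite sum_exp_div_lagrange_denom ?ltnS ?leq_subr //=.
  by rewrite ltn_eqF // ltn_subrL j_gt0 (leq_trans j_gt0 le_jn).
have -> : j = n.+1 by apply/eqP; rewrite eqn_leq le_j_Sn.
under eq_bigr => k _ do
  rewrite exprS invfM [u k ^+ n * _]mulrCA mulfV ?expf_neq0 // mulr1.
exact: sum_inv_div_lagrange_denom.
Qed.

Section YoungDiagramCombinatorics.
Local Open Scope nat_scope.

Definition corner_rows (la : seq nat) : seq nat :=
  [seq i <- iota 0 (size la) | nth 0 la i.+1 < nth 0 la i].

Lemma cornersE la : corners la = [seq (i.+1, nth 0 la i) | i <- corner_rows la].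
Proof. by []. Qed.

Lemma addableE la : addable la =
  (1, (nth 0 la 0).+1) :: [seq (i.+2, (nth 0 la i.+1).+1) | i <- corner_rows la].
Proof. by rewrite /addable /= (iotaDl 1 0) filter_map -map_comp. Qed.

Lemma size_addable la : size (addable la) = (size (corners la)).+1.
Proof. by rewrite addableE cornersE /= !size_map. Qed.

Lemma corner_rows_telescope la : sorted geq la ->
  nth 0 la 0 + \sum_(i <- corner_rows la) nth 0 la i.+1
  = \sum_(i <- corner_rows la) nth 0 la i.
Proof.
rewrite /corner_rows !big_filter.
elim: la => [|a la IH] la_sorted; first by rewrite !big_nil.
rewrite /= (iotaDl 1 0) !big_cons !big_map -IH ?(path_sorted la_sorted) //=.
have le_la0_a : nth 0 la 0 <= a by case: la la_sorted {IH} => //= b la /andP [].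
case: ltnP => [_ | ge_la0_a]; first by rewrite addnCA.
by have /eqP -> : nth 0 la 0 == a by rewrite eqn_leq le_la0_a.
Qed.

End YoungDiagramCombinatorics.

Lemma xvar_neq0 : xvar != 0.
Proof. rewrite /xvar tofrac_eq0 polyC_eq0 polyX_eq0; exact: isT. Qed.

Lemma tvar_neq0 : tvar != 0.
Proof. rewrite /tvar tofrac_eq0 polyX_eq0; exact: isT. Qed.

Lemma wt_neq0 b : wt b != 0.
Proof. exact: mulf_neq0 (expf_neq0 _ xvar_neq0) (expf_neq0 _ tvar_neq0). Qed.

Lemma wt_inj_row a b : wt a = wt b -> (a.1 - 1 = b.1 - 1)%N.
Proof.
rewrite /wt /xvar /tvar -!tofracXn -!tofracM => /eqP; rewrite tofrac_eq.
rewrite -!(rmorphXn (@polyC _)) !mul_polyC => /eqP /(congr1 lead_coef).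
rewrite !lead_coefZ !lead_coefXn !mulr1 => /(congr1 (fun p : {poly rat} => size p)).
by rewrite !size_polyXn => -[].
Qed.

Lemma uniq_addable_wt la : uniq [seq wt b | b <- addable la].
Proof.
have row_inj : injective (fun i => (i.+1, (nth 0%N la i).+1)) by move=> i i' [].
rewrite map_inj_in_uniq; first by rewrite map_inj_uniq ?filter_uniq ?iota_uniq.
move=> _ _ /mapP [i _ ->] /mapP [i' _ ->] /wt_inj_row /= /eqP.
by rewrite !subn1 /= => /eqP ->.
Qed.

Lemma prod_addable_wt la : sorted geq la ->
  \prod_(b <- addable la) wt b = \prod_(c <- corners la) (xvar * tvar * wt c).
Proof.
move=> la_sorted; rewrite addableE cornersE big_cons !big_map /wt /=.
rewrite [RHS](eq_big_seq (fun i => xvar ^+ i.+1 * tvar ^+ nth 0%N la i)); last first.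
  move=> i; rewrite mem_filter => /andP [lt_nth _] /=.
  by rewrite mulrACA -!exprS !subn1 (prednK (leq_ltn_trans (leq0n _) lt_nth)).
under [in LHS]eq_bigr => i _ do rewrite !subn1.
rewrite !big_split /= !prodrXr -corner_rows_telescope //.
by rewrite subnn subn1 expr0 mul1r exprD mulrCA.
Qed.

Theorem lemmaC0p1 (la : seq nat) (j : nat) :
  is_partition la ->
  let l := size (corners la) in
  let X := fun i : nat => xvar * tvar * wt (nth (0%N, 0%N) (corners la) i) in
  let U := fun k : nat => wt (nth (0%N, 0%N) (addable la) k) in
  (j <= l.+1)%N ->
  \sum_(k < l.+1)
     (U k ^+ j)^-1 / \prod_(i < l.+1 | i != k) (1 - U i / U k)
  = if j == 0%N then 1
    else if (j <= l)%N then 0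
    else (-1) ^+ l / \prod_(i < l) X i.
Proof.
move=> /andP [la_sorted _] l X U le_j_Sl.
have size_addable_l : size (addable la) = l.+1 := size_addable la.
have U_inj : injective (fun k : 'I_l.+1 => U k).
  have lt_size (m : 'I_l.+1) : (m < size (addable la))%N.
    by rewrite size_addable_l ltn_ord.
  move=> i k.
  rewrite /U -(nth_map _ 0 wt (lt_size i)) -(nth_map _ 0 wt (lt_size k)) => /eqP.
  by rewrite nth_uniq ?(size_map wt) ?lt_size ?uniq_addable_wt // => /eqP/val_inj.
have -> : \prod_(i < l) X i = \prod_(k < l.+1) U k.
  have prod_U : \prod_(b <- addable la) wt b = \prod_(k < l.+1) U k.
    by rewrite (big_nth (0%N, 0%N)) size_addable_l big_mkord.
  have prod_X : \prod_(c <- corners la) (xvar * tvar * wt c) = \prod_(i < l) X i.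
    by rewrite (big_nth (0%N, 0%N)) big_mkord.
  by rewrite -prod_U -prod_X prod_addable_wt.
exact: (sum_inv_exp_div_prod_one_sub U_inj (fun k => wt_neq0 _) le_j_Sl).
Qed.
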